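(* Let $N\ge1$, $0\le k\le N$, and $I=\{N-k+1,\dots,N\}$. Then, as polynomials in $\xi_1,\dots,\xi_N$, \[ \sum_{\substack{J\subset\{1,\dots,N\}\\|J|=k}}\operatorname{sgn}(I,J)\prod_{i\in J}(\xi_i-1)^{N-k}\prod_{\substack{i<j\\ i,j\in J}}(\xi_j-\xi_i)\prod_{\substack{i<j\\ i,j\in J^c}}(\xi_j-\xi_i)=\prod_{1\le i<j\le N}(\xi_j-\xi_i). \]
   Context: For $I,J\subset\{1,\dots,N\}$ with $|I|=|J|=k$, write $I=\{i_1<\dots<i_k\}$, $I^c=\{1,\dots,N\}\setminus I=\{i_{k+1}<\dots<i_N\}$, $J=\{j_1<\dots<j_k\}$, $J^c=\{j_{k+1}<\dots<j_N\}$; $\operatorname{sgn}(I,J)$ is the sign of the permutation sending $i_m\mapsto j_m$ for $m=1,\dots,N$. *)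

From HB Require Import structures.
From mathcomp Require Import all_boot all_order all_algebra all_fingroup.
Set Implicit Arguments.
Unset Strict Implicit.
Unset Printing Implicit Defensive.
Import GRing.Theory.

(* For A : {set 'I_N}, the list of elements of A in increasing order followed
   by the elements of the complement A^c in increasing order
   (enum of a set of ordinals lists them increasingly). *)
Definition ordlist N (A : {set 'I_N}) : seq 'I_N := enum A ++ enum (~: A).

Lemma ordlist_uniq N (A : {set 'I_N}) : uniq (ordlist A).
Proof.
rewrite /ordlist cat_uniq !enum_uniq /= andbT.
by apply/hasPn => x; rewrite !mem_enum in_setC.
Qed.

Lemma ordlist_mem N (A : {set 'I_N}) x : x \in ordlist A.
Proof. by rewrite /ordlist mem_cat !mem_enum in_setC orbN. Qed.

Lemma ordlist_size N (A : {set 'I_N}) : size (ordlist A) = N.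
Proof.
by rewrite /ordlist size_cat -!cardE -cardsUI setUCr setICr cards0 addn0 cardsT card_ord.
Qed.

(* The map sending i_m |-> j_m (m = 1..N), where (i_1..i_N) = ordlist I,
   (j_1..j_N) = ordlist J. *)
Definition match_fun N (I J : {set 'I_N}) (x : 'I_N) : 'I_N :=
  nth x (ordlist J) (index x (ordlist I)).

Lemma match_fun_inj N (I J : {set 'I_N}) : injective (match_fun I J).
Proof.
move=> x y; rewrite /match_fun => Exy.
have hx : index x (ordlist I) < size (ordlist J)
  by rewrite ordlist_size (leq_trans _ (eq_leq (ordlist_size I))) // index_mem ordlist_mem.
have hy : index y (ordlist I) < size (ordlist J)
  by rewrite ordlist_size (leq_trans _ (eq_leq (ordlist_size I))) // index_mem ordlist_mem.
rewrite (set_nth_default x y hy) in Exy.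
have := nth_uniq x hx hy (ordlist_uniq J).
rewrite Exy eqxx => /esym/eqP Ei.
by rewrite -(nth_index x (ordlist_mem I x)) Ei nth_index ?ordlist_mem.
Qed.

Definition match_perm N (I J : {set 'I_N}) : 'S_N := perm (@match_fun_inj N I J).

Definition sgnIJ (R : ringType) N (I J : {set 'I_N}) : R :=
  (-1) ^+ odd_perm (match_perm I J).

From HB Require Import structures.
From mathcomp Require Import all_boot all_order all_algebra all_fingroup.
Import GRing.Theory.
Set Implicit Arguments.
Unset Strict Implicit.
Unset Printing Implicit Defensive.
Local Open Scope ring_scope.

(* The Vandermonde product is det [p_i(xi_j)] for any family of monic p_i of
   degree i.  Take p_i = X^i for i < N - k and p_i = (X - 1)^(N-k) X^(i-N+k)
   otherwise, and expand the determinant along its last k rows: for the column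
   set J, the minor on rows I is prod_(j in J) (xi_j - 1)^(N-k) times the
   Vandermonde product of J, and the complementary minor is the Vandermonde
   product of the complement of J. *)

Section Polynomials.
Variable R : comRingType.

Lemma det_horner_monic n (p : 'I_n -> {poly R}) (x : 'I_n -> R) :
  (forall i, p i \is monic) -> (forall i, size (p i) = i.+1) ->
  \det (\matrix_(i, j) (p i).[x j]) =
  \prod_(i < n) \prod_(j < n | (i < j)%N) (x j - x i).
Proof.
move=> p_monic p_size.
have -> : \matrix_(i, j) (p i).[x j] =
    (\matrix_(i, l < n) (p i)`_l) *m Vandermonde n (\row_j x j).
  apply/matrixP => i j; rewrite !mxE (@horner_coef_wide _ n) ?p_size //.
  by apply: eq_bigr => l _; rewrite !mxE.
rewrite det_mulmx det_Vandermonde det_trig; last first.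
  by apply/is_trig_mxP => i j ij; rewrite mxE nth_default ?p_size.
rewrite big1 ?mul1r => [|i _]; first by under eq_bigr do under eq_bigr do rewrite !mxE.
by have /monicP := p_monic i; rewrite mxE /lead_coef p_size.
Qed.

Definition basis_poly n1 i : {poly R} :=
  if (i < n1)%N then 'X^i else ('X - 1)^+ n1 * 'X^(i - n1).

Lemma basis_poly_monic n1 i : basis_poly n1 i \is monic.
Proof.
rewrite /basis_poly; case: ifP => _; first exact: monicXn.
by rewrite monicMl ?monicXn // monic_exp // -polyC1 monicXsubC.
Qed.

Lemma size_basis_poly n1 i : size (basis_poly n1 i) = i.+1.
Proof.
rewrite /basis_poly; case: ifPn => [_|]; first exact: size_polyXn.
rewrite -ltnNge -polyC1 => n1_le_i.
rewrite size_monicM ?monic_exp ?monicXsubC ?monic_neq0 ?monicXn //.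
by rewrite size_exp_XsubC size_polyXn addSn addnS subnKC.
Qed.

Lemma det_Vandermonde_row n (x : 'I_n -> R) :
  \det (Vandermonde n (\row_l x l)) = \prod_(i < n) \prod_(j < n | (i < j)%N) (x j - x i).
Proof. by rewrite det_Vandermonde; under eq_bigr do under eq_bigr do rewrite !mxE. Qed.

Lemma det_basis_poly_lshift n1 n2 (x : 'I_n1 -> R) :
  \det (\matrix_(i, l) (basis_poly n1 (lshift n2 i)).[x l]) =
  \prod_(i < n1) \prod_(j < n1 | (i < j)%N) (x j - x i).
Proof.
rewrite -det_Vandermonde_row; congr (\det _); apply/matrixP => i l.
by rewrite !mxE /basis_poly /= ltn_ord hornerXn.
Qed.

Lemma det_basis_poly_rshift n1 n2 (x : 'I_n2 -> R) :
  \det (\matrix_(i, l) (basis_poly n1 (rshift n1 i)).[x l]) =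
  \prod_l (x l - 1) ^+ n1 * \prod_(i < n2) \prod_(j < n2 | (i < j)%N) (x j - x i).
Proof.
have -> : \matrix_(i, l) (basis_poly n1 (rshift n1 i)).[x l] =
    Vandermonde n2 (\row_l x l) *m diag_mx (\row_l (x l - 1) ^+ n1).
  apply/matrixP => i l; rewrite mul_mx_diag !mxE /basis_poly /= ltnNge leq_addr /= addKn.
  by rewrite hornerM horner_exp hornerXsubC hornerXn mulrC.
by rewrite det_mulmx det_Vandermonde_row det_diag mulrC; under eq_bigr do rewrite mxE.
Qed.

End Polynomials.

Lemma match_perm_mem N (I J : {set 'I_N}) x : #|I| = #|J| ->
  (match_perm I J x \in J) = (x \in I).
Proof.
move=> cIJ; rewrite permE /match_fun /ordlist index_cat nth_cat -!cardE.
have cIJC : #|~: I| = #|~: J|.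
  by apply/eqP; rewrite -(eqn_add2l #|I|) cardsC cIJ cardsC.
have [xI|xI] := boolP (x \in I); rewrite mem_enum ?xI ?(negbTE xI).
  have x_lt : (index x (enum I) < #|J|)%N by rewrite -cIJ cardE index_mem mem_enum.
  by rewrite x_lt -mem_enum mem_nth // -cardE.
rewrite -cIJ ltnNge leq_addr /= addKn.
have x_lt : (index x (enum (~: I)) < #|~: J|)%N.
  by rewrite -cIJC cardE index_mem mem_enum inE.
by apply/negbTE; rewrite -in_setC -mem_enum mem_nth // -cardE.
Qed.

Lemma prod_if0 (R : comRingType) (T : finType) (P : pred T) (F : T -> R) :
  \prod_i (if P i then F i else 0) = if [forall i, P i] then \prod_i F i else 0.
Proof.
have [/forallP P_all | /forallPn [i Pi]] := boolP [forall i, P i].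
  by apply: eq_bigr => i _; rewrite P_all.
by rewrite (bigD1 i) //= (negbTE Pi) mul0r.
Qed.

Section Laplace.
Variables (R : comRingType) (N : nat) (I : {set 'I_N}) (M : 'M[R]_N).

(* Rows of I meet the columns of J, rows of ~: I those of ~: J, both in
   increasing order, so its determinant is the minor of M on I x J times the
   complementary minor; the Laplace sign is carried by sgnIJ. *)
Definition laplace_minor (J : {set 'I_N}) : 'M[R]_N :=
  \matrix_(i, l) if (i \in I) == (l \in I) then M i (match_perm I J l) else 0.

Lemma sgnIJ_det_laplace_minor (J : {set 'I_N}) : #|J| = #|I| ->
  sgnIJ R I J * \det (laplace_minor J) =
  \sum_(s : 'S_N) if [forall i, (i \in I) == (s i \in J)]
                  then (-1) ^+ s * \prod_i M i (s i) else 0.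
Proof.
move=> cJ; set mu := match_perm I J.
rewrite /determinant mulr_sumr (reindex_inj (mulIg mu^-1)%g) /=.
apply: eq_bigr => s _.
rewrite odd_permM odd_permV signr_addb /sgnIJ -/mu mulrCA -mulrA signrMK.
have mu_mem i : (mu^-1%g (s i) \in I) = (s i \in J).
  by rewrite -(match_perm_mem _ (esym cJ)) permKV.
under eq_bigr do rewrite mxE permM permKV mu_mem.
by rewrite prod_if0; case: ifP; rewrite ?mulr0.
Qed.

(* Each permutation survives exactly for J = s @: I. *)
Lemma expand_det_rows :
  \det M = \sum_(J : {set 'I_N} | #|J| == #|I|) sgnIJ R I J * \det (laplace_minor J).
Proof.
under eq_bigr => J /eqP cJ do rewrite sgnIJ_det_laplace_minor //.
rewrite exchange_big /= /determinant; apply: eq_bigr => s _.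
have cs : #|s @: I| == #|I| by rewrite card_imset //; exact: perm_inj.
rewrite (bigD1 (s @: I)) //= [X in _ + X]big1 ?addr0.
  suff -> : [forall i, (i \in I) == (s i \in s @: I)] by [].
  by apply/forallP => i; rewrite mem_imset //; exact: perm_inj.
move=> J /andP [_ nJ]; case: ifP => // /forallP sIJ.
case/eqP: nJ; apply/setP => y; rewrite -[y](permKV s) mem_imset; last exact: perm_inj.
by rewrite (eqP (sIJ _)).
Qed.

End Laplace.

Lemma sorted_enum_ord n : sorted (relpre val ltn) (enum 'I_n).
Proof. by rewrite -sorted_map val_enum_ord iota_ltn_sorted. Qed.

Lemma sorted_enum_set n (A : {set 'I_n}) : sorted (relpre val ltn) (enum A).
Proof.
rewrite /enum_mem -enumT; apply: sorted_filter (sorted_enum_ord n).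
by move=> ? ? ?; apply: ltn_trans.
Qed.

Lemma nth_sorted_ltn_mono n (s : seq 'I_n) x0 : sorted (relpre val ltn) s ->
  {in [pred l | (l < size s)%N] &, {mono (fun l => val (nth x0 s l)) : l m / (l < m)%N}}.
Proof.
move=> s_sorted; apply/leqW_mono_in/leq_mono_in => l m l_lt m_lt.
by apply: (sorted_ltn_nth _ x0 s_sorted) => // ? ? ?; apply: ltn_trans.
Qed.

Section ProdEnum.
Variables (R : comRingType) (n : nat) (A : {set 'I_n}) (x0 : 'I_n) (m : nat).
Hypothesis cardA : #|A| = m.

Lemma prod_set_enum_nth (F : 'I_n -> R) :
  \prod_(i in A) F i = \prod_(l < m) F (nth x0 (enum A) l).
Proof. by rewrite -big_enum (big_nth x0) big_mkord -cardE cardA. Qed.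

Lemma prod_pairs_set_enum_nth (F : 'I_n -> 'I_n -> R) :
  \prod_(i in A) \prod_(j in A | (i < j)%N) F i j =
  \prod_(l < m) \prod_(l' < m | (l < l')%N) F (nth x0 (enum A) l) (nth x0 (enum A) l').
Proof.
rewrite prod_set_enum_nth; apply: eq_bigr => l _.
rewrite -big_enum_cond (big_nth x0) big_mkord -cardE cardA; apply: eq_bigl => l'.
by rewrite (nth_sorted_ltn_mono _ (sorted_enum_set A)) // inE -cardE cardA.
Qed.

End ProdEnum.

Definition last_ords n1 n2 : {set 'I_(n1 + n2)} := [set i : 'I_(n1 + n2) | (n1 <= i)%N].

Section LastOrds.
Variables n1 n2 : nat.
Local Notation I := (last_ords n1 n2).

Lemma lshift_last_ords (i : 'I_n1) : (lshift n2 i \in I) = false.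
Proof. by rewrite inE /= leqNgt ltn_ord. Qed.

Lemma rshift_last_ords (i : 'I_n2) : rshift n1 i \in I.
Proof. by rewrite inE /= leq_addr. Qed.

Lemma enum_last_ords : enum I = map (@rshift n1 n2) (enum 'I_n2).
Proof.
apply: (@irr_sorted_eq _ (relpre val ltn)) => [? ? ? | ? | | | x].
- exact: ltn_trans.
- exact: ltnn.
- exact: sorted_enum_set.
- rewrite sorted_map; apply: sub_sorted (sorted_enum_ord n2) => ? ?.
  by rewrite /= ltn_add2l.
rewrite mem_enum; case: (splitP x) => j xj.
  have -> : x = lshift n2 j by exact: val_inj.
  rewrite lshift_last_ords; apply/esym/mapP => -[y _ /(congr1 val) /= yj].
  by have := ltn_ord j; rewrite yj ltnNge leq_addr.
have -> : x = rshift n1 j by exact: val_inj.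
by rewrite rshift_last_ords; apply/esym/map_f; rewrite mem_enum.
Qed.

Lemma enum_setC_last_ords : enum (~: I) = map (@lshift n1 n2) (enum 'I_n1).
Proof.
apply: (@irr_sorted_eq _ (relpre val ltn)) => [? ? ? | ? | | | x].
- exact: ltn_trans.
- exact: ltnn.
- exact: sorted_enum_set.
- by rewrite sorted_map; apply: sorted_enum_ord.
rewrite mem_enum inE; case: (splitP x) => j xj.
  have -> : x = lshift n2 j by exact: val_inj.
  by rewrite lshift_last_ords; apply/esym/map_f; rewrite mem_enum.
have -> : x = rshift n1 j by exact: val_inj.
rewrite rshift_last_ords; apply/esym/mapP => -[y _ /(congr1 val) /= yj].
by have := ltn_ord y; rewrite -yj ltnNge leq_addr.
Qed.

Lemma card_last_ords : #|I| = n2.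
Proof. by rewrite cardE enum_last_ords size_map size_enum_ord. Qed.

Lemma card_setC_last_ords (J : {set 'I_(n1 + n2)}) : #|J| = n2 -> #|~: J| = n1.
Proof. by move=> cJ; apply/eqP; rewrite -(eqn_add2l n2) -{1}cJ cardsC card_ord addnC. Qed.

Lemma match_perm_rshift (J : {set 'I_(n1 + n2)}) x0 l : #|J| = n2 ->
  match_perm I J (rshift n1 l) = nth x0 (enum J) l.
Proof.
move=> cJ; rewrite permE /match_fun /ordlist enum_last_ords enum_setC_last_ords index_cat.
rewrite map_f ?mem_enum // index_map ?index_enum_ord; last exact: rshift_inj.
by rewrite nth_cat -cardE cJ ltn_ord; apply: set_nth_default; rewrite -cardE cJ.
Qed.

Lemma match_perm_lshift (J : {set 'I_(n1 + n2)}) x0 l : #|J| = n2 ->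
  match_perm I J (lshift n2 l) = nth x0 (enum (~: J)) l.
Proof.
move=> cJ; rewrite permE /match_fun /ordlist enum_last_ords enum_setC_last_ords index_cat.
rewrite -enum_last_ords mem_enum lshift_last_ords -cardE card_last_ords.
rewrite index_map ?index_enum_ord; last exact: lshift_inj.
rewrite nth_cat -cardE cJ ltnNge leq_addr /= addKn.
by apply: set_nth_default; rewrite -cardE card_setC_last_ords.
Qed.

Variable R : comRingType.

Lemma laplace_minor_last_ords (M : 'M[R]_(n1 + n2)) (J : {set 'I_(n1 + n2)}) x0 :
  #|J| = n2 ->
  laplace_minor I M J =
  block_mx (\matrix_(i, l) M (lshift n2 i) (nth x0 (enum (~: J)) l)) 0
           0 (\matrix_(i, l) M (rshift n1 i) (nth x0 (enum J) l)).
Proof.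
move=> cJ; apply/matrixP => i l; rewrite mxE -(splitK i) -(splitK l).
case: (split i) => i'; case: (split l) => l';
  rewrite ?block_mxEul ?block_mxEur ?block_mxEdl ?block_mxEdr
          ?lshift_last_ords ?rshift_last_ords ?mxE //=.
  by rewrite (match_perm_lshift x0).
by rewrite (match_perm_rshift x0).
Qed.

Lemma expand_det_last_rows (M : 'M[R]_(n1 + n2)) x0 :
  \det M = \sum_(J : {set 'I_(n1 + n2)} | #|J| == n2) sgnIJ R I J *
    (\det (\matrix_(i, l) M (lshift n2 i) (nth x0 (enum (~: J)) l)) *
     \det (\matrix_(i, l) M (rshift n1 i) (nth x0 (enum J) l))).
Proof.
rewrite (expand_det_rows I) card_last_ords; apply: eq_bigr => J /eqP cJ.
by rewrite (laplace_minor_last_ords _ x0 cJ) det_ublock.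
Qed.

End LastOrds.

Theorem corollary2p4 (R : comRingType) (N k : nat) (xi : 'I_N -> R) :
  (1 <= N)%N -> (k <= N)%N ->
  let I := [set i : 'I_N | (N - k <= i)%N] in
  \sum_(J : {set 'I_N} | #|J| == k)
     sgnIJ R I J
     * \prod_(i in J) (xi i - 1) ^+ (N - k)
     * \prod_(i in J) \prod_(j in J | (i < j)%N) (xi j - xi i)
     * \prod_(i in ~: J) \prod_(j in ~: J | (i < j)%N) (xi j - xi i)
  = \prod_(i : 'I_N) \prod_(j : 'I_N | (i < j)%N) (xi j - xi i).
Proof.
move=> N_gt0 kN.
have [n1 N_eq] : exists n1, N = (n1 + k)%N by exists (N - k)%N; rewrite subnK.
subst N; rewrite /= addnK -/(last_ords n1 k).
(* Only a default index for nth; this is where 1 <= N is needed. *)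
pose x0 : 'I_(n1 + k) := Ordinal N_gt0.
rewrite -(@det_horner_monic _ _ (basis_poly R n1) xi) => [|i|i]; last first.
- exact: size_basis_poly.
- exact: basis_poly_monic.
rewrite (expand_det_last_rows _ x0); apply: eq_bigr => J /eqP cJ.
under eq_mx do rewrite mxE.
rewrite (det_basis_poly_lshift k (fun l => xi (nth x0 (enum (~: J)) l))).
under eq_mx do rewrite mxE.
rewrite (det_basis_poly_rshift n1 (fun l => xi (nth x0 (enum J) l))).
rewrite (prod_set_enum_nth x0 cJ) (prod_pairs_set_enum_nth x0 cJ).
rewrite (prod_pairs_set_enum_nth x0 (card_setC_last_ords cJ)).
by rewrite -!mulrA; congr (_ * _); rewrite mulrA mulrC.
Qed.
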